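(* Let $G^{(1)},\dots,G^{(\ell)}$ be directed graphs on a common node set $V$ and run SKIM (described in the context) with sketch parameter $k$. Consider any iteration of SKIM, and let $v$ be the seed node selected in that iteration, with threshold rank $\tau_v$ (the $k$th smallest rank in its partial sketch at selection time). Then, at the end of that iteration (after the residual update), for every node $u$ not in the seed set, the updated partial sketch $X_u$ is equal to the set of entries of the combined reachability sketch $X'_u$ of $u$ in the residual problem that have rank value at most $\tau_v$.
   Context: Each node-instance pair $(z,i)$ ($z\in V$, $i\in[\ell]$) has an independent uniform random rank $r^{(i)}_z\in[0,1]$. The residual problem after an iteration is obtained from the instances by removing all covered node-instance pairs (pairs $(z,i)$ such that $z$ is reachable in $G^{(i)}$ from some already selected seed). In the residual problem, the combined reachability sketch $X'_u$ of $u$ is the set of the $k$ smallest ranks $r^{(i)}_z$ over pairs $(z,i)$ such that $z$ is reachable from $u$ in the residual instance $i$ (the graph $G^{(i)}$ restricted to its uncovered nodes), with $u$ reaching itself. SKIM with parameter $k$: maintain a set of covered pairs (initially empty), a partial sketch $X_w$ (set of ranks, initially empty) for every node $w$, and a list of seeds. Repeat: (1) process uncovered pairs $(u,i)$ in increasing rank order, continuing from where the previous iteration stopped; for each, do a reverse reachability search from $u$ in $G^{(i)}$ restricted to uncovered pairs of instance $i$, inserting $r^{(i)}_u$ into $X_w$ for every visited node $w$; stop as soon as some node $x$ has $|X_x|=k$, and select $x$ as the next seed (if all pairs are exhausted, select a node of maximum $|X_x|$). (2) For each instance $i$, do a forward reachability search from $x$ in $G^{(i)}$ pruning at covered pairs,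 mark the reached pairs as covered, and remove their ranks from all partial sketches ($X_u\leftarrow X_u\setminus X_x$). *)

From HB Require Import structures.
From mathcomp Require Import all_boot all_order all_algebra.
From mathcomp Require Import reals.

Set Implicit Arguments.
Unset Strict Implicit.
Unset Printing Implicit Defensive.

Import Order.TTheory GRing.Theory Num.Theory.
Local Open Scope ring_scope.

Section SKIM.
Variable R : realType.
Variable V : finType.
Variable l : nat.
Variable G : 'I_l -> rel V.      (* G i x y : edge x -> y in G^(i) *)
Variable r : V -> 'I_l -> R.
Variable k : nat.

Notation pair := (V * 'I_l)%type.

Definition rk (p : pair) : R := r p.1 p.2.

Definition resid_edge (cov : {set pair}) (i : 'I_l) : rel V :=
  [rel y z | [&& G i y z, (y, i) \notin cov & (z, i) \notin cov]].

Definition resid_reach (cov : {set pair}) (i : 'I_l) (a b : V) : bool :=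
  [&& (a, i) \notin cov, (b, i) \notin cov & connect (resid_edge cov i) a b].

Definition reach_pairs (cov : {set pair}) (u : V) : {set pair} :=
  [set p : pair | resid_reach cov p.2 u p.1].

(* the k smallest-rank elements of S (ranks are assumed distinct) *)
Definition bottomk (S : {set pair}) : {set pair} :=
  [set p in S | (#|[set q in S | (rk q < rk p)%R]| < k)%N].

Definition comb_sketch (cov : {set pair}) (u : V) : {set pair} :=
  bottomk (reach_pairs cov u).

(* k-th smallest rank of a partial sketch (1, the maximal rank value,
   if the sketch has fewer than k entries) *)
Definition kth_rank (S : {set pair}) : R :=
  nth 1 (sort <=%R [seq rk p | p <- enum S]) k.-1.

(* State of SKIM: covered pairs, partial sketches (as sets of node-instance
   pairs, identified with their ranks), processed pairs, seed list. *)
Record state := State {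
  covered : {set pair};
  sketch : {ffun V -> {set pair}};
  processed : {set pair};
  seeds : seq V
}.

Definition init_state : state := State set0 [ffun => set0] set0 [::].

Definition pending (s : state) (p : pair) : bool :=
  (p \notin covered s) && (p \notin processed s).

(* one step of phase (1): process the next uncovered pair (u,i) in increasing
   rank order, by a reverse residual search from u in instance i *)
Definition proc_step (s s' : state) : Prop :=
  (forall w, #|sketch s w| < k)%N /\
  exists p : pair,
    [/\ pending s p,
        (forall q, pending s q -> rk p <= rk q) &
        s' = State (covered s)
                   [ffun w => if resid_reach (covered s) p.2 w p.1
                              then p |: sketch s w else sketch s w]
                   (p |: processed s) (seeds s)].

Inductive proc_star : state -> state -> Prop :=
| proc_refl s : proc_star s s
| proc_next s1 s2 s3 : proc_step s1 s2 -> proc_star s2 s3 -> proc_star s1 s3.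

Definition selectable (s : state) (x : V) : Prop :=
  #|sketch s x| = k \/
  [/\ (forall p, ~~ pending s p), (forall w, #|sketch s w| < k)%N &
      (forall w, #|sketch s w| <= #|sketch s x|)%N].

Definition new_cov (cov : {set pair}) (x : V) : {set pair} :=
  [set p : pair | resid_reach cov p.2 x p.1].

Definition update (s : state) (x : V) : state :=
  let N := new_cov (covered s) x in
  State (covered s :|: N) [ffun w => sketch s w :\: N]
        (processed s) (rcons (seeds s) x).

Definition iteration (s s' : state) (v : V) (tau : R) : Prop :=
  exists s1, [/\ proc_star s s1, selectable s1 v,
                 tau = kth_rank (sketch s1 v) & s' = update s1 v].

Inductive skim_reachable : state -> Prop :=
| reach_init : skim_reachable init_state
| reach_iter s s' v tau :
    skim_reachable s -> iteration s s' v tau -> skim_reachable s'.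

End SKIM.

From HB Require Import structures.
From mathcomp Require Import all_boot all_order all_algebra.
From mathcomp Require Import reals.
Import Order.TTheory GRing.Theory Num.Theory.
Local Open Scope ring_scope.

Set Implicit Arguments.
Unset Strict Implicit.
Unset Printing Implicit Defensive.

(* SKIM maintains three facts: each partial sketch X_w is the set of processed
   pairs residually reachable from w, every processed pair has smaller rank
   than every pending (unprocessed, uncovered) pair, and a full sketch bounds
   the rank of every processed uncovered pair. Covering the pairs reachable
   from the new seed x shrinks residual reachability by exactly those pairs,
   since by transitivity a node that residually reaches a pair left uncovered
   is itself left uncovered; so the residual update preserves the first fact.
   Hence after the iteration X_u is a rank-prefix, of size at most k, of the
   residual reach set of u, and the threshold tau_v separates it from the
   unprocessed pairs: this prefix is exactly the part of the bottom-k sketch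
   of rank <= tau_v. *)

Lemma connect_toward (T : finType) (e : rel T) (x y : T) :
  connect e x y -> connect [rel a b | e a b && connect e b y] x y.
Proof.
case/connectP=> p + ->; elim: p x => [|z p IHp] x /=; first by rewrite connect0.
case/andP=> exz pz; apply: connect_trans (IHp z pz); apply: connect1.
by rewrite /= exz; apply/connectP; exists p.
Qed.

Section Residual.
Variables (V : finType) (l : nat) (G : 'I_l -> rel V).

Lemma resid_reach_trans cov i : transitive (resid_reach G cov i).
Proof.
move=> b a c /and3P[ac _ ab] /and3P[_ cc bc].
by rewrite /resid_reach ac cc (connect_trans ab bc).
Qed.

Lemma reach_pairs_uncovered cov w p : p \in reach_pairs G cov w -> p \notin cov.
Proof. by case: p => z i; rewrite inE => /and3P[]. Qed.

Lemma reach_pairs_update cov x w :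
  reach_pairs G (cov :|: new_cov G cov x) w = reach_pairs G cov w :\: new_cov G cov x.
Proof.
apply/setP=> -[z i]; rewrite !inE /=.
have inU a :
  ((a, i) \in cov :|: new_cov G cov x) = ((a, i) \in cov) || resid_reach G cov i x a.
  by rewrite !inE.
apply/idP/andP.
  case/and3P; rewrite !inU !negb_or => /andP[wc _] /andP[zc xz] wz.
  split=> //; rewrite /resid_reach wc zc /=.
  apply: connect_sub wz => a b /and3P[gab].
  rewrite !inU !negb_or => /andP[ac _] /andP[bc _].
  by apply: connect1; rewrite /resid_edge /= gab ac bc.
case=> xz /and3P[wc zc wz].
have unreached c : (c, i) \notin cov -> connect (resid_edge G cov i) c z ->
    ~~ resid_reach G cov i x c.
  move=> cc cz; apply: contra xz => xc.
  by apply: resid_reach_trans xc _; rewrite /resid_reach cc zc.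
rewrite /resid_reach !inU !negb_or wc zc xz (unreached w) //=.
apply: connect_sub (connect_toward wz) => a b /andP[eab bz].
have /and3P[gab ac bc] := eab.
have az : connect (resid_edge G cov i) a z by apply: connect_trans (connect1 eab) bz.
by apply: connect1; rewrite /resid_edge /= gab !inU !negb_or ac bc !unreached.
Qed.

End Residual.

Section Ranks.
Variables (R : realType) (V : finType) (l : nat) (r : V -> 'I_l -> R) (k : nat).
Hypothesis k_gt0 : (0 < k)%N.

Local Notation rk := (rk r).
Local Notation ranks S := (sort <=%R [seq rk p | p <- enum S]).

Lemma kth_rank_default (S : {set V * 'I_l}) : (#|S| < k)%N -> kth_rank r k S = 1.
Proof.
by move=> small; rewrite /kth_rank nth_default // size_sort size_map -cardE -ltnS prednK.
Qed.

Section FullSketch.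
Variable S : {set V * 'I_l}.
Hypothesis card_S : #|S| = k.

Let size_ranks : size (ranks S) = k.
Proof. by rewrite size_sort size_map -cardE. Qed.

Lemma kth_rank_mem : exists2 p, p \in S & kth_rank r k S = rk p.
Proof.
have : kth_rank r k S \in ranks S by apply: mem_nth; rewrite size_ranks prednK.
by rewrite mem_sort => /mapP[p]; rewrite mem_enum; exists p.
Qed.

Lemma rk_le_kth_rank q : q \in S -> rk q <= kth_rank r k S.
Proof.
move=> qS; have qr : rk q \in ranks S by rewrite mem_sort map_f ?mem_enum.
rewrite -(nth_index 1 qr) /kth_rank.
apply: le_sorted_leq_nth; rewrite ?sort_sorted ?inE ?index_mem ?size_ranks ?prednK //.
  exact: le_total.
by rewrite -ltnS prednK // -size_ranks index_mem.
Qed.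

End FullSketch.

Lemma bottomk_prefix (P S : {set V * 'I_l}) (tau : R) :
    (#|P :&: S| <= k)%N ->
    {in P & S :\: P, forall p q, rk p <= rk q} ->
    {in P :&: S, forall p, rk p <= tau} ->
    {in S :\: P, forall q, tau < rk q} ->
  P :&: S = [set p in bottomk r k S | rk p <= tau].
Proof.
move=> card_PS P_le P_le_tau tau_lt; apply/setP=> p; rewrite !inE.
apply/idP/idP=> [PSp | /andP[/andP[pS _] p_le]]; last first.
  rewrite pS andbT; apply: contraLR p_le => pP.
  by rewrite -ltNge tau_lt // inE pP pS.
have /andP[pP pS] := PSp; rewrite pS P_le_tau ?inE ?pP ?pS //= andbT.
apply: leq_trans card_PS; apply: proper_card; apply/properP; split.
  apply/subsetP=> q; rewrite !inE => /andP[qS q_lt]; rewrite qS andbT.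
  by apply: contraTT q_lt => qP; rewrite -leNgt P_le // inE qP.
by exists p; rewrite ?inE ?pP ?pS ?ltxx.
Qed.

End Ranks.

Section Invariant.
Variables (R : realType) (V : finType) (l : nat) (G : 'I_l -> rel V).
Variables (r : V -> 'I_l -> R) (k : nat).

Local Notation rk := (rk r).

Record skim_inv (s : state V l) : Prop := SkimInv {
  sketchE : forall w, sketch s w = processed s :&: reach_pairs G (covered s) w;
  card_sketch_le : forall w, (#|sketch s w| <= k)%N;
  processed_le_pending : forall p q, p \in processed s -> pending s q -> rk p <= rk q;
  full_sketch_dominates : forall w, #|sketch s w| = k ->
    forall q, q \in processed s -> q \notin covered s ->
    exists2 p, p \in sketch s w & rk q <= rk p
}.

Lemma skim_inv_init : skim_inv (init_state V l).
Proof. by split=> /= [w|w|p q|w _ q]; rewrite ?ffunE ?set0I ?cards0 ?inE. Qed.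

Lemma skim_inv_proc_step s s' : skim_inv s -> proc_step G r k s s' -> skim_inv s'.
Proof.
case=> sketchE _ P_le _ [small [p [pend_p p_min ->]]].
split=> /= [w|w|p' q|w]; rewrite ?ffunE /pending /=.
- rewrite sketchE; case: ifP => reach_p; apply/setP=> q; rewrite !inE;
    by case: eqVneq => [->|] //=; rewrite reach_p ?andbF.
- have := small w; case: ifP => _ lt_wk; last exact: ltnW.
  by apply: leq_trans lt_wk; rewrite cardsU1 -add1n leq_add2r leq_b1.
- rewrite !inE negb_or => /orP[/eqP-> | p'P] /and3P[qc _ qP];
    [apply: p_min | apply: P_le p'P _]; by rewrite /pending qc qP.
- case: ifP => _ card_w; last by have := small w; rewrite card_w ltnn.
  move=> q; rewrite !inE => /orP[/eqP->|qP] _; exists p; rewrite ?setU11 //.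
  exact: P_le qP pend_p.
Qed.

Lemma skim_inv_proc_star s s' : proc_star G r k s s' -> skim_inv s -> skim_inv s'.
Proof. by elim=> // s1 s2 s3 step _ IH inv_s1; apply/IH/(skim_inv_proc_step inv_s1). Qed.

Lemma skim_inv_update s x : skim_inv s -> skim_inv (update G s x).
Proof.
case=> sketchE card_le P_le full.
split=> /= [w|w|p q|w]; rewrite ?ffunE /pending /=.
- by rewrite sketchE reach_pairs_update setIDA.
- exact: leq_trans (subset_leq_card (subsetDl _ _)) (card_le w).
- rewrite inE negb_or => pP /andP[/andP[qc _] qP].
  by apply: P_le pP _; rewrite /pending qc qP.
- move=> card_w q qP; rewrite inE negb_or => /andP[qc _].
  have unchanged : sketch s w :\: new_cov G (covered s) x = sketch s w.
    by apply/eqP; rewrite eqEcard subsetDl card_w card_le.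
  by rewrite unchanged in card_w *; apply: full.
Qed.

Lemma skim_inv_reachable s : skim_reachable G r k s -> skim_inv s.
Proof.
elim=> [|s0 s1 v tau _ inv_s0 [s2 [s0_s2 _ _ ->]]]; first exact: skim_inv_init.
exact/skim_inv_update/(skim_inv_proc_star s0_s2).
Qed.

End Invariant.

Section Threshold.
Variables (R : realType) (V : finType) (l : nat) (G : 'I_l -> rel V).
Variables (r : V -> 'I_l -> R) (k : nat).
Hypothesis r_range : forall z i, 0 <= r z i <= 1.
Hypothesis r_inj : forall z i z' j, r z i = r z' j -> (z, i) = (z', j).
Hypothesis k_gt0 : (0 < k)%N.

Lemma rk_inj : injective (rk r).
Proof. by move=> [z i] [z' j] /r_inj. Qed.

Variables (s : state V l) (v : V).
Hypotheses (inv_s : skim_inv G r k s) (sel_v : selectable k s v).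

Lemma processed_le_threshold p :
  p \in processed s -> p \notin covered s -> rk r p <= kth_rank r k (sketch s v).
Proof.
move=> pP pc; case: sel_v => [full_v | [_ small _]]; last first.
  (* no sketch is full: the threshold is the default rank 1 *)
  by rewrite kth_rank_default //; case/andP: (r_range p.1 p.2).
have [q qv le_pq] := full_sketch_dominates inv_s full_v pP pc.
exact: le_trans le_pq (rk_le_kth_rank r k_gt0 full_v qv).
Qed.

Lemma threshold_lt_pending q : pending s q -> kth_rank r k (sketch s v) < rk r q.
Proof.
move=> pend_q; case: sel_v => [full_v | [no_pending _ _]]; last first.
  by have := no_pending q; rewrite pend_q.
have [p pv ->] := kth_rank_mem r k_gt0 full_v.
have pP : p \in processed s by move: pv; rewrite (sketchE inv_s) inE => /andP[].
rewrite lt_neqAle (processed_le_pending inv_s pP pend_q) andbT.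
by apply: contraTneq pend_q => /rk_inj <-; rewrite /pending pP andbF.
Qed.

End Threshold.

Theorem mainTheorem2 (R : realType) (V : finType) (l : nat)
    (G : 'I_l -> rel V) (r : V -> 'I_l -> R) (k : nat)
    (r_range : forall z i, 0 <= r z i <= 1)
    (r_inj : forall z i z' j, r z i = r z' j -> (z, i) = (z', j))
    (k_pos : (0 < k)%N)
    (s s' : state V l) (v : V) (tau : R) :
  skim_reachable G r k s ->
  iteration G r k s s' v tau ->
  forall u : V, u \notin seeds s' ->
    sketch s' u = [set p in comb_sketch G r k (covered s') u | rk r p <= tau].
Proof.
move=> reach_s [s1 [s_s1 sel_v -> ->]] u _.
have inv_s1 := skim_inv_proc_star s_s1 (skim_inv_reachable reach_s).
have [sketchE' card_le' _ _] := skim_inv_update v inv_s1.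
have := card_le' u; rewrite sketchE' /comb_sketch /=.
set S := reach_pairs _ _ u => card_PS.
have uncovered_S p : p \in S -> p \notin covered s1.
  by move=> /reach_pairs_uncovered; rewrite inE negb_or => /andP[].
have pending_S q : q \in S -> q \notin processed s1 -> pending s1 q.
  by move=> /uncovered_S qc qP; apply/andP.
apply: bottomk_prefix => // [p q pP /setDP[qS qP] | p /setIP[pP pS] | q /setDP[qS qP]].
- exact: (processed_le_pending inv_s1 pP (pending_S q qS qP)).
- exact: (processed_le_threshold r_range k_pos inv_s1 sel_v pP (uncovered_S p pS)).
- exact: (threshold_lt_pending r_inj k_pos inv_s1 sel_v (pending_S q qS qP)).
Qed.
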